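(* Let $c$ be a prismatic 5-circuit in a compact right-angled hyperbolic polyhedron $P$, crossing edges $e_1,\dots,e_5$ and faces $F_1,\dots,F_5$ (indices mod 5). Then there is no $i$ such that, on one and the same side of $c$, $F_{i-1}$ and $F_{i+1}$ both contain flats of $c$ and $F_i$ contains a roof of $c$.
   Context: A compact right-angled hyperbolic polyhedron is a nonempty compact convex intersection of finitely many closed half-spaces of $\mathbb{H}^3$ all of whose dihedral angles equal $\pi/2$. It has trivalent 1-skeleton and no prismatic 3- or 4-circuits, and every face has at least 5 edges. A $k$-circuit is a simple closed curve on $\partial P$ meeting the 1-skeleton transversely, in interior points of exactly $k$ distinct edges; it is prismatic if the $2k$ endpoints of these edges are pairwise distinct. For a prismatic 5-circuit $c$ crossing edges $e_1,\dots,e_5$ in cyclic order, $F_i$ denotes the face containing both $e_i$ and $e_{i+1}$. An edge $d$ of $F_i$ is a flat of $c$ if, on one side of $c$, the part of $F_i$ cut off by the arc $c\cap F_i$ is a combinatorial quadrilateral whose side opposite to that arc is $d$. A roof of $c$ in $F_i$ is a pair of edges $r_1,r_2$ of $F_i$ such that, on one side of $c$, the part of $F_i$ cut off by $c\cap F_i$ is a combinatorial pentagon bounded by that arc, two partial edges, and $r_1,r_2$. Flats and roofs lie on the side of $c$ in question. *)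

(* Combinatorial model of (the boundary of) a polyhedron as an
   oriented combinatorial map on a finite set of darts (half-edges). *)
From mathcomp Require Import all_boot.

Set Implicit Arguments. Unset Strict Implicit. Unset Printing Implicit Defensive.

Section Map.
Variables (D : finType) (rev nxt : D -> D).
(* rev d  : the opposite half-edge of d (same edge, reversed orientation);
   nxt d  : the next dart along the boundary of the face lying to the left of d,
            i.e. faces are the nxt-orbits (traversed counterclockwise);
   rot d := nxt (rev d) : rotation around the origin vertex of d,
            i.e. vertices are the rot-orbits. *)

Definition rot (d : D) : D := nxt (rev d).

Definition dart_adj : rel D := fun a b => (b == rev a) || (b == nxt a).

(* The combinatorial type of a compact right-angled hyperbolic polyhedron:
   the boundary of a simple (trivalent) convex 3-polytope, i.e. a connected
   planar (Euler characteristic 2) map whose faces are simple cycles and any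
   two of which share at most one edge, together with the standing facts
   (no prismatic 3-/4-circuits, every face has >= 5 edges) stated below. *)
Definition polyhedral_map : Prop :=
  [/\ (forall d, rev (rev d) = d) /\ (forall d, rev d != d), injective nxt,
      (forall d d', connect dart_adj d d'),
      (* Euler: 2 (V + F) = 2 E + 4 with 2 E = #darts *)
      (fcard rot predT + fcard nxt predT).*2 = #|D| + 4 &
      ((* every face boundary is a simple cycle (no repeated vertex) *)
      (forall d d', fconnect nxt d d' -> fconnect rot d d' -> d = d') /\
      (* two faces share at most one edge (and no edge bounds the same face twice) *)
      (forall d d', fconnect nxt d d' -> fconnect nxt (rev d) (rev d') -> d = d'))].

Definition trivalent : Prop := forall d, order rot d = 3.

Definition faces_ge5 : Prop := forall d, 5 <= order nxt d.

(* A k-circuit is encoded, up to isotopy, by the cyclic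
   sequence of crossed edges: x j is the dart of the j-th crossed edge e_j
   whose left face is the face F_j the curve enters after crossing e_j.
   The curve then runs inside F_j along an arc (chord) from e_j to
   e_{j+1}; on the boundary of F_j the edge e_{j+1} is the dart
   rev (x (j+1)). *)
Variable k : nat.
Implicit Type x : 'I_k -> D.

Definition entry x (j : 'I_k) : D := x j.
Definition exit x (j : 'I_k) : D := rev (x (ordS j)).

Definition k_circuit x : Prop :=
  [/\
      (forall j l, j != l -> x j != x l /\ x j != rev (x l)),
      (forall j, fconnect nxt (entry x j) (exit x j)) &
      (* simplicity: two arcs in the same face do not cross, i.e. their
         endpoints are not interlaced along the face boundary *)
      (forall j l, j != l -> fconnect nxt (entry x j) (entry x l) ->
         let a := entry x j in
         (findex nxt a (entry x l) < findex nxt a (exit x j))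
           = (findex nxt a (exit x l) < findex nxt a (exit x j)))].

(* endpoint b of the crossed edge e_j (as a dart whose origin is it) *)
Definition endpt x (j : 'I_k) (b : bool) : D := if b then rev (x j) else x j.

Definition prismatic x : Prop :=
  k_circuit x /\
  forall j l (b b' : bool), (j, b) != (l, b') ->
    ~~ fconnect rot (endpt x j b) (endpt x l b').

(* Orient the curve by its crossing order; side [true] is the right
   side.  In F_j the part on side [true] is bounded by the arc, the end of
   e_j, the boundary darts strictly between entry and exit (in nxt order),
   and the start of e_{j+1}; side [false] uses the complementary boundary
   arc from exit to entry. *)
Definition side_start x (s : bool) j : D := if s then entry x j else exit x j.
Definition side_end x (s : bool) j : D := if s then exit x j else entry x j.

(* F_j contains a flat of c on side s: the cut-off part is a quadrilateral
   (arc, partial edge, one full edge d = nxt start, partial edge). *)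
Definition has_flat x s j : Prop := iter 2 nxt (side_start x s j) = side_end x s j.

(* F_j contains a roof of c on side s: the cut-off part is a pentagon
   (arc, partial edge, two full edges r1 r2, partial edge). *)
Definition has_roof x s j : Prop := iter 3 nxt (side_start x s j) = side_end x s j.

End Map.

Definition no_prismatic (D : finType) (rev nxt : D -> D) (k : nat) : Prop :=
  forall x : 'I_k -> D, ~ prismatic rev nxt x.

Definition compact_RA_type (D : finType) (rev nxt : D -> D) : Prop :=
  [/\ polyhedral_map rev nxt, trivalent rev nxt, no_prismatic rev nxt 3,
      no_prismatic rev nxt 4 & faces_ge5 nxt].

(* Let d be the flat edge of F_{i-1}, r1 and r2 the roof edges of F_i and d'
   the flat edge of F_{i+1}.  By trivalence the third edges g (at the end of
   e_{i-1} on d), f (between r1 and r2) and h (at the end of e_{i+2} on d')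
   make the face G beyond d and r1, the face H beyond r2 and d', F_{i+2} and
   F_{i+3} cyclically adjacent along g, f, h, e_{i+3}: a 4-circuit around
   F_{i-1}, F_i, F_{i+1}.  As faces have at least five sides, two faces share
   at most one edge and c is prismatic, this 4-circuit is prismatic unless
   e_{i+3} is adjacent to g or to h; then the third edge at that vertex closes
   a prismatic 3-circuit instead. *)

From Pilot Require Import Defs.
From mathcomp Require Import all_boot.

Set Implicit Arguments. Unset Strict Implicit. Unset Printing Implicit Defensive.

Lemma cycle_nth (T : Type) (r : rel T) (a0 : T) (s : seq T) :
  cycle r s -> forall j : 'I_(size s), r (nth a0 s j) (nth a0 s (ordS j)).
Proof.
case: s => [|a s] /=; first by move=> _ [].
move=> /(pathP a0) Hr [j /= lt_j_s].
have := Hr j; rewrite size_rcons -rcons_cons !nth_rcons /= => /(_ lt_j_s).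
rewrite lt_j_s; have [lt_j|ge_j] := ltnP j (size s).
  by rewrite modn_small.
have -> : j = size s by apply/eqP; rewrite eqn_leq ge_j andbT -ltnS.
by rewrite modnn eqxx.
Qed.

Section Map.
Variables (D : finType) (rev nxt : D -> D).
Hypotheses (revK : involutive rev) (revN : forall d, rev d != d)
  (nxtI : injective nxt) (tri : trivalent rev nxt) (ge5 : faces_ge5 nxt)
  (one_common_edge : forall d d', fconnect nxt d d' ->
     fconnect nxt (rev d) (rev d') -> d = d').

Local Notation rot := (Defs.rot rev nxt).
Local Notation same_face := (fconnect nxt).
Local Notation same_vertex := (fconnect rot).

Lemma rotI : injective rot.
Proof. by move=> a b /nxtI /(can_inj revK). Qed.

Lemma same_face_sym : symmetric same_face.
Proof. exact: fconnect_sym. Qed.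

Lemma same_vertex_sym : symmetric same_vertex.
Proof. exact: fconnect_sym rotI. Qed.

Lemma same_face_trans a b c : same_face a b -> same_face b c -> same_face a c.
Proof. exact: connect_trans. Qed.

Lemma same_face_nxt a : same_face a (nxt a).
Proof. exact: fconnect1. Qed.

Lemma rot3K a : rot (rot (rot a)) = a.
Proof. by have := iter_order rotI a; rewrite tri. Qed.

Lemma same_vertex_cases a b : same_vertex a b -> [\/ b = a, b = rot a | rot b = a].
Proof.
rewrite fconnect_orbit /orbit tri /= !inE => /or3P[] /eqP ->.
- by constructor 1.
- by constructor 2.
- by constructor 3; rewrite rot3K.
Qed.

Lemma traject_nxt_uniq a : uniq (traject nxt a 5).
Proof.
by rewrite -(take_traject nxt a (ge5 a)); apply: take_uniq; apply: orbit_uniq.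
Qed.

Lemma not_same_face_rev a : ~~ same_face a (rev a).
Proof.
apply/negP => Fa; have := one_common_edge Fa.
by rewrite revK same_face_sym => /(_ Fa) Ea; move: (revN a); rewrite -Ea eqxx.
Qed.

Lemma not_same_vertex_rev a : ~~ same_vertex a (rev a).
Proof.
apply/negP => /same_vertex_cases[]; rewrite /Defs.rot ?revK => Ea.
- by move: (revN a); rewrite Ea eqxx.
- by move: (traject_nxt_uniq (rev a)); rewrite /= -Ea !inE eqxx.
- by move: (traject_nxt_uniq a); rewrite /= Ea !inE eqxx.
Qed.

Lemma same_vertex_faces a b : same_vertex a b ->
  [\/ same_face a b, same_face (rev a) b | same_face a (rev b)].
Proof.
case/same_vertex_cases=> [->|->|<-]; first by constructor 1.
- by constructor 2; apply: same_face_nxt.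
- by constructor 3; rewrite same_face_sym; apply: same_face_nxt.
Qed.

Lemma same_face_nxt_l a b : same_face (nxt a) b = same_face a b.
Proof.
by apply: same_connect; [apply: fconnect_sym | rewrite same_face_sym same_face_nxt].
Qed.

Lemma same_face_nxt_r a b : same_face a (nxt b) = same_face a b.
Proof. by rewrite same_face_sym same_face_nxt_l same_face_sym. Qed.

Lemma same_vertex_nxt_rev a b : nxt (rev a) = b -> same_vertex a b.
Proof. by move<-; apply: fconnect1. Qed.

Lemma nxt_rev_triangle a b c :
  nxt (rev a) = b -> nxt (rev b) = c -> nxt (rev c) = a.
Proof. by move=> Ea Eb; have := rot3K a; rewrite /Defs.rot Ea Eb. Qed.

Lemma edge_faces_neq a u v :
  same_face u a -> same_face v (rev a) -> ~~ same_face u v.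
Proof.
move=> Fua Fva; apply/negP => Fuv; move/negP: (not_same_face_rev a); apply.
by apply: same_face_trans (same_face_trans Fuv Fva); rewrite same_face_sym.
Qed.

(* Around the head of [a] the faces of [b] and of [rev a] already share the
   edge [nxt b]; as two faces share at most one edge, a second common edge
   [c] must be that one. *)
Lemma nxt_eq_of_common_faces a b c : nxt a = rev b ->
  same_face b c -> same_face (rev a) (rev c) -> nxt b = c.
Proof.
move=> Eab Fbc Fac.
have Enb : nxt (rev (nxt b)) = rev a.
  by apply: (@nxt_rev_triangle _ (rev b)); rewrite ?revK.
apply: one_common_edge; first by rewrite same_face_nxt_l.
by apply: same_face_trans _ Fac; rewrite -Enb same_face_nxt.
Qed.

(* [a] and [rev b] are at distance at least two, both ways, along their common
   face. *)
Definition nonadjacent a b :=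
  [&& a != rev b, nxt a != rev b & nxt (rev b) != a].

Lemma nonadjacent_apart a b : same_face a (rev b) -> nonadjacent a b ->
  forall ba bb : bool,
  ~~ same_vertex (if ba then rev a else a) (if bb then rev b else b).
Proof.
move=> Fab /and3P[n_ab n_nab n_nba].
have no_rev u v : same_face u v -> same_face u (rev v) -> False.
  move=> Fuv Fuv'; move/negP: (not_same_face_rev v); apply.
  by apply: same_face_trans _ Fuv'; rewrite same_face_sym.
have a_rev_b : a = rev b -> False by move=> Ea; move: n_ab; rewrite Ea eqxx.
(* Each way two endpoints could meet either puts both sides of an edge on one
   face or makes a, b adjacent. *)
case=> -[]; apply/negP => /same_vertex_cases[]; rewrite /Defs.rot ?revK => E.
- by apply: (no_rev a a); rewrite // -E.
- by move: n_nab; rewrite E eqxx.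
- apply: a_rev_b; apply: one_common_edge Fab _.
  by rewrite revK same_face_sym -E same_face_nxt.
- by apply: a_rev_b; rewrite E revK.
- by apply: (no_rev a b); rewrite // E same_face_nxt.
- by apply: (no_rev a a) => //; apply: same_face_trans Fab _; rewrite -E same_face_nxt.
- by apply: a_rev_b; rewrite -E.
- by apply: (no_rev (rev b) a); rewrite same_face_sym // E same_face_nxt.
- by apply: (no_rev b b) => //; apply: same_face_trans _ Fab; rewrite -E same_face_nxt.
- by rewrite E in Fab; apply: (no_rev a a).
- have /(congr1 rev) : rev a = b.
    by apply: one_common_edge; rewrite ?revK // E same_face_nxt.
  by rewrite revK => /a_rev_b.
- by move: n_nba; rewrite E eqxx.
Qed.

(* e_j and e_l bound the four distinct faces F_{j-1}, F_j, F_{l-1}, F_l, whereas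
   edges meeting at a vertex share a face. *)
Lemma distant_edges_apart k (x : 'I_k -> D) :
  (forall j, same_face (x j) (rev (x (ordS j)))) ->
  (forall j l, j != l -> ~~ same_face (x j) (x l)) ->
  forall j l b b', j != l -> l != ordS j -> j != ordS l ->
  ~~ same_vertex (endpt rev x j b) (endpt rev x l b').
Proof.
move=> link faces j l b b' ne_jl ne_lSj ne_jSl.
have ne_ends i' l' : i' \in [:: j; ord_pred j] -> l' \in [:: l; ord_pred l] ->
    i' != l'.
  rewrite !inE => /orP[]/eqP-> /orP[]/eqP->.
  - exact: ne_jl.
  - by apply: contra ne_lSj => /eqP->; rewrite ord_predK.
  - by apply: contra ne_jSl => /eqP<-; rewrite ord_predK.
  - by rewrite (inj_eq (@ord_pred_inj _)).
have face_of i c : exists2 i', i' \in [:: i; ord_pred i] &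
    same_face (x i') (endpt rev x i c).
  case: c; [exists (ord_pred i) | exists i]; rewrite ?inE ?eqxx ?orbT //.
  by have := link (ord_pred i); rewrite ord_predK.
have apart c c' : ~~ same_face (endpt rev x j c) (endpt rev x l c').
  have [j' Hj' Fj] := face_of j c; have [l' Hl' Fl] := face_of l c'.
  apply/negP => F; move/negP: (faces _ _ (ne_ends _ _ Hj' Hl')); apply.
  by apply: same_face_trans Fj (same_face_trans F _); rewrite same_face_sym.
have endpt_rev i c : rev (endpt rev x i c) = endpt rev x i (~~ c).
  by case: c; rewrite /endpt ?revK.
apply/negP => /same_vertex_faces[] F; move: F; rewrite ?endpt_rev; apply/negP.
all: exact: apart.
Qed.

Lemma prismatic_of_faces k (x : 'I_k -> D) :
  (forall j, same_face (x j) (rev (x (ordS j)))) ->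
  (forall j l, j != l -> ~~ same_face (x j) (x l)) ->
  (forall j, nonadjacent (x j) (x (ordS j))) ->
  prismatic rev nxt x.
Proof.
move=> link faces sep.
have ends j l (b b' : bool) : (j, b) != (l, b') ->
    ~~ same_vertex (endpt rev x j b) (endpt rev x l b').
  have [<-|ne_jl] := eqVneq j l.
    by case: b b' => -[]; rewrite ?eqxx // => _; rewrite /endpt
      ?[same_vertex (rev _) _]same_vertex_sym not_same_vertex_rev.
  have [-> _|ne_lSj] := eqVneq l (ordS j).
    exact: (nonadjacent_apart (link j) (sep j) b b').
  have [-> _|ne_jSl] := eqVneq j (ordS l).
    by rewrite same_vertex_sym; apply: (nonadjacent_apart (link l) (sep l) b' b).
  by move=> _; apply: distant_edges_apart.
split; [split|exact: ends].
- move=> j l ne_jl; split; apply/negP => /eqP Exjl.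
  + have ne : (j, false) != (l, false) by apply: contra ne_jl => /eqP[->].
    by move/negP: (ends _ _ _ _ ne); apply; rewrite /endpt Exjl connect0.
  + have ne : (j, false) != (l, true) by rewrite xpair_eqE andbF.
    by move/negP: (ends _ _ _ _ ne); apply; rewrite /endpt Exjl connect0.
- exact: link.
- by move=> j l ne_jl; rewrite /entry (negbTE (faces j l ne_jl)).
Qed.

Lemma prismatic_of_seq (s : seq D) (a0 : D) :
  cycle (fun a b => same_face a (rev b)) s ->
  pairwise (fun a b => ~~ same_face a b) s ->
  cycle nonadjacent s ->
  prismatic rev nxt (fun j : 'I_(size s) => nth a0 s j).
Proof.
move=> /(cycle_nth a0) link /(pairwiseP a0) faces_lt /(cycle_nth a0) sep.
apply: prismatic_of_faces => // j l.
case: (ltngtP j l) => [lt_jl|lt_lj|/val_inj->]; last by rewrite eqxx.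
- by move=> _; apply: faces_lt (ltn_ord j) (ltn_ord l) lt_jl.
- by move=> _; rewrite same_face_sym; apply: faces_lt (ltn_ord l) (ltn_ord j) lt_lj.
Qed.

Ltac uniq_contra U :=
  let E := fresh "E" in
  apply/eqP => E; move: U; rewrite E /= !inE !eqxx /= ?orbT ?andbF.

Section FlatRoofFlat.

(* On side [true] of c: A, B, C, E, F are e_{i-1}, ..., e_{i+3}, with
   F_{i-1}, ..., F_{i+3} on their left; g, f, h leave the common vertex of A
   and d, of r1 and r2, of E and d', so that G, H, F_{i+2}, F_{i+3} are the
   faces of g, f, h, F. *)
Variables (A B C E F d r1 r2 d' g f h : D).
Hypotheses (link_EF : same_face E (rev F)) (link_FA : same_face F (rev A)).
Hypotheses (nxt_A : nxt A = d) (nxt_d : nxt d = rev B).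
Hypotheses (nxt_B : nxt B = r1) (nxt_r1 : nxt r1 = r2) (nxt_r2 : nxt r2 = rev C).
Hypotheses (nxt_C : nxt C = d') (nxt_d' : nxt d' = rev E).
Hypotheses (nxt_rev_d : nxt (rev d) = g) (nxt_rev_r2 : nxt (rev r2) = f)
  (nxt_E : nxt E = h).
Hypotheses (rA_F : ~~ same_vertex (rev A) F) (rA_rF : ~~ same_vertex (rev A) (rev F))
  (rE_F : ~~ same_vertex (rev E) F) (rE_rF : ~~ same_vertex (rev E) (rev F)).

Lemma nxt_rev_r1 : nxt (rev r1) = rev d.
Proof. by apply: (@nxt_rev_triangle (rev d) (rev B)); rewrite revK. Qed.

Lemma nxt_rev_f : nxt (rev f) = rev r1.
Proof. by apply: (@nxt_rev_triangle (rev r1) r2); rewrite ?revK. Qed.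

Lemma nxt_rev_d' : nxt (rev d') = rev r2.
Proof. by apply: (@nxt_rev_triangle (rev r2) (rev C)); rewrite revK. Qed.

Lemma nxt_rev_g : nxt (rev g) = rev A.
Proof. by apply: (@nxt_rev_triangle (rev A) d); rewrite ?revK. Qed.

Lemma nxt_rev_h : nxt (rev h) = rev d'.
Proof. by apply: (@nxt_rev_triangle (rev d') (rev E)); rewrite revK. Qed.

Lemma face_g_uniq : uniq [:: rev f; rev r1; rev d; g; nxt g].
Proof.
by have := traject_nxt_uniq (rev f); rewrite /= nxt_rev_f nxt_rev_r1 nxt_rev_d.
Qed.

Lemma face_f_uniq : uniq [:: rev h; rev d'; rev r2; f; nxt f].
Proof.
by have := traject_nxt_uniq (rev h); rewrite /= nxt_rev_h nxt_rev_d' nxt_rev_r2.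
Qed.

Lemma link_gf : same_face g (rev f).
Proof.
have := fconnect_iter nxt 3 (rev f).
by rewrite /= nxt_rev_f nxt_rev_r1 nxt_rev_d same_face_sym.
Qed.

Lemma link_fh : same_face f (rev h).
Proof.
have := fconnect_iter nxt 3 (rev h).
by rewrite /= nxt_rev_h nxt_rev_d' nxt_rev_r2 same_face_sym.
Qed.

Lemma link_hF : same_face h (rev F).
Proof. by rewrite -nxt_E same_face_nxt_l. Qed.

Lemma link_Fg : same_face F (rev g).
Proof.
by apply: same_face_trans link_FA _; rewrite -nxt_rev_g same_face_sym same_face_nxt.
Qed.

Lemma h_neq_rev_F : h != rev F.
Proof.
by apply: contraNneq rE_rF => <-; apply: same_vertex_nxt_rev; rewrite revK.
Qed.

Lemma faces_gf : ~~ same_face g f.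
Proof. by apply: (edge_faces_neq link_gf); rewrite revK; apply: connect0. Qed.

Lemma faces_gh : ~~ same_face g h.
Proof.
apply/negP => Fgh; have Eg : g = rev F.
  apply: one_common_edge; first exact: same_face_trans Fgh link_hF.
  by rewrite revK same_face_sym link_Fg.
move/negP: rA_rF; apply; rewrite -Eg same_vertex_sym.
exact: same_vertex_nxt_rev nxt_rev_g.
Qed.

Lemma faces_gF : ~~ same_face g F.
Proof. exact: edge_faces_neq (connect0 _ g) link_Fg. Qed.

Lemma faces_fh : ~~ same_face f h.
Proof. by apply: (edge_faces_neq link_fh); rewrite revK; apply: connect0. Qed.

Lemma faces_fF : ~~ same_face f F.
Proof.
apply/negP => FfF; have Eh : rev h = F.
  apply: one_common_edge; last by rewrite revK link_hF.
  by apply: same_face_trans _ FfF; rewrite same_face_sym link_fh.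
by move/negP: h_neq_rev_F; apply; rewrite -Eh revK.
Qed.

Lemma faces_hF : ~~ same_face h F.
Proof. by apply: (edge_faces_neq link_hF); rewrite revK; apply: connect0. Qed.

Lemma nonadjacent_gf : nonadjacent g f.
Proof.
by rewrite /nonadjacent nxt_rev_f; apply/and3P; split; uniq_contra face_g_uniq.
Qed.

Lemma nonadjacent_fh : nonadjacent f h.
Proof.
by rewrite /nonadjacent nxt_rev_h; apply/and3P; split; uniq_contra face_f_uniq.
Qed.

Lemma nonadjacent_hF : nxt h != rev F -> nonadjacent h F.
Proof.
move=> nhF; rewrite /nonadjacent h_neq_rev_F nhF /=.
apply: contraNneq rE_F; rewrite -nxt_E => /nxtI <-; rewrite revK; exact: connect0.
Qed.

Lemma nonadjacent_Fg : nxt F != rev g -> nonadjacent F g.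
Proof.
move=> nFg; rewrite /nonadjacent nFg nxt_rev_g /=; apply/andP; split.
  apply: contraNneq rA_rF => ->; rewrite revK same_vertex_sym.
  exact: same_vertex_nxt_rev nxt_rev_g.
by apply: contraNneq rA_F => ->; apply: connect0.
Qed.

Lemma prismatic_gfhF : nxt h != rev F -> nxt F != rev g ->
  prismatic rev nxt (fun j : 'I_4 => nth g [:: g; f; h; F] j).
Proof.
move=> nhF nFg; apply: (@prismatic_of_seq [:: g; f; h; F]) => /=.
- by rewrite link_gf link_fh link_hF link_Fg.
- by rewrite faces_gf faces_gh faces_gF faces_fh faces_fF faces_hF.
- by rewrite nonadjacent_gf nonadjacent_fh nonadjacent_hF // nonadjacent_Fg.
Qed.

Section AdjacentFg.

Hypothesis nxt_F : nxt F = rev g.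

Lemma nxt_rev_nxt_g : nxt (rev (nxt g)) = rev F.
Proof. by apply: (@nxt_rev_triangle (rev F) (rev g)); rewrite ?revK. Qed.

Lemma link_h_nxt_g : same_face h (rev (nxt g)).
Proof.
apply: same_face_trans link_hF _.
by rewrite -nxt_rev_nxt_g same_face_nxt_l; apply: connect0.
Qed.

Lemma nxt_nxt_g_neq : nxt (nxt g) != rev f.
Proof.
have nfh : nxt f != rev h by uniq_contra face_f_uniq.
apply/eqP => Ek; move/eqP: nfh; apply.
apply: (nxt_eq_of_common_faces Ek); first exact: link_fh.
by rewrite revK same_face_sym link_h_nxt_g.
Qed.

Lemma nonadjacent_h_nxt_g : nonadjacent h (nxt g).
Proof.
apply/and3P; split.
- apply/eqP => Eh; move/negP: faces_gf; apply.
  apply: same_face_trans (same_face_nxt g) _.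
  by rewrite -[nxt g]revK -Eh same_face_sym link_fh.
- apply/eqP => Enh; move/eqP: nxt_nxt_g_neq; apply.
  apply: (nxt_eq_of_common_faces Enh); first by rewrite same_face_nxt_l link_gf.
  by rewrite revK same_face_sym link_fh.
- by rewrite nxt_rev_nxt_g eq_sym h_neq_rev_F.
Qed.

Lemma nonadjacent_nxt_g_f : nonadjacent (nxt g) f.
Proof.
rewrite /nonadjacent nxt_nxt_g_neq nxt_rev_f /=.
by apply/andP; split; uniq_contra face_g_uniq.
Qed.

Lemma prismatic_f_h_nxt_g :
  prismatic rev nxt (fun j : 'I_3 => nth f [:: f; h; nxt g] j).
Proof.
apply: (@prismatic_of_seq [:: f; h; nxt g]) => /=.
- by rewrite link_fh link_h_nxt_g same_face_nxt_l link_gf.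
- by rewrite faces_fh !same_face_nxt_r (same_face_sym f) faces_gf
    (same_face_sym h) faces_gh.
- by rewrite nonadjacent_fh nonadjacent_h_nxt_g nonadjacent_nxt_g_f.
Qed.

End AdjacentFg.

Section AdjacenthF.

Hypotheses (nxt_h : nxt h = rev F) (nxt_F : nxt F != rev g).

Lemma nxt_rev_nxt_F : nxt (rev (nxt F)) = rev h.
Proof. by apply: (@nxt_rev_triangle (rev h) (rev F)); rewrite ?revK. Qed.

Lemma link_f_nxt_F : same_face f (rev (nxt F)).
Proof.
apply: same_face_trans link_fh _.
by rewrite -nxt_rev_nxt_F same_face_nxt_l; apply: connect0.
Qed.

Lemma nxt_nxt_F_neq : nxt (nxt F) != rev g.
Proof.
have ngf : nxt g != rev f by uniq_contra face_g_uniq.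
apply/eqP => Em; move/eqP: ngf; apply.
apply: (nxt_eq_of_common_faces Em); first exact: link_gf.
by rewrite revK same_face_sym link_f_nxt_F.
Qed.

Lemma nonadjacent_f_nxt_F : nonadjacent f (nxt F).
Proof.
apply/and3P; split.
- apply/eqP => Ef; move/negP: faces_gF; apply; rewrite same_face_sym.
  apply: same_face_trans (same_face_nxt F) _.
  by rewrite -[nxt F]revK -Ef same_face_sym link_gf.
- apply/eqP => Enf; move/eqP: nxt_nxt_F_neq; apply.
  apply: (nxt_eq_of_common_faces Enf); first by rewrite same_face_nxt_l link_Fg.
  by rewrite revK same_face_sym link_gf.
- by rewrite nxt_rev_nxt_F; uniq_contra face_f_uniq.
Qed.

Lemma nonadjacent_nxt_F_g : nonadjacent (nxt F) g.
Proof.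
rewrite /nonadjacent nxt_F nxt_nxt_F_neq nxt_rev_g /=.
apply: contraNneq rA_rF => ->; rewrite same_vertex_sym.
by apply: same_vertex_nxt_rev; rewrite revK.
Qed.

Lemma prismatic_f_nxt_F_g :
  prismatic rev nxt (fun j : 'I_3 => nth f [:: f; nxt F; g] j).
Proof.
apply: (@prismatic_of_seq [:: f; nxt F; g]) => /=.
- by rewrite link_f_nxt_F same_face_nxt_l link_Fg link_gf.
- by rewrite same_face_nxt_r faces_fF (same_face_sym f) faces_gf
    same_face_nxt_l (same_face_sym F) faces_gF.
- by rewrite nonadjacent_f_nxt_F nonadjacent_nxt_F_g nonadjacent_gf.
Qed.

End AdjacenthF.

Lemma flat_roof_flat_contra :
  no_prismatic rev nxt 3 -> no_prismatic rev nxt 4 -> False.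
Proof.
move=> np3 np4.
have [EFg|nFg] := eqVneq (nxt F) (rev g); first exact: np3 (prismatic_f_h_nxt_g EFg).
have [EhF|nhF] := eqVneq (nxt h) (rev F).
  exact: np3 (prismatic_f_nxt_F_g EhF nFg).
exact: np4 (prismatic_gfhF nhF nFg).
Qed.

End FlatRoofFlat.

Lemma prismatic5_no_flat_roof_flat (x : 'I_5 -> D) :
  no_prismatic rev nxt 3 -> no_prismatic rev nxt 4 -> prismatic rev nxt x ->
  forall j s, ~ [/\ has_flat rev nxt x s j, has_roof rev nxt x s (ordS j)
                  & has_flat rev nxt x s (ordS (ordS j))].
Proof.
move=> np3 np4 [[_ link _] ends] j s [flat_j roof flat_j2].
have ordS5 : ordS (ordS (ordS (ordS (ordS j)))) = j.
  by apply/val_inj; case: j {flat_j roof flat_j2} => [[|[|[|[|[|m]]]]] Hm].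
have [ne_j ne_j3] : j != ordS (ordS (ordS (ordS j))) /\
    ordS (ordS (ordS j)) != ordS (ordS (ordS (ordS j))).
  by case: j {flat_j roof flat_j2 ordS5} => [[|[|[|[|[|m]]]]] Hm].
have apart l l' b b' : l != l' -> ~~ same_vertex (endpt rev x l b) (endpt rev x l' b').
  by move=> ne_ll'; apply: ends; rewrite xpair_eqE negb_and ne_ll'.
set j1 := ordS j in roof flat_j2 ordS5 ne_j ne_j3 *.
set j2 := ordS j1 in flat_j2 ordS5 ne_j ne_j3 *.
set j3 := ordS j2 in ordS5 ne_j ne_j3 *.
set j4 := ordS j3 in ordS5 ne_j ne_j3 *.
have link4 : same_face (x j4) (rev (x j)) by rewrite -ordS5; apply: link.
case: s flat_j roof flat_j2 => /= flat_j roof flat_j2.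
  exact: (flat_roof_flat_contra (link j3) link4 erefl flat_j erefl erefl roof
    erefl flat_j2 erefl erefl erefl (apart _ _ true false ne_j)
    (apart _ _ true true ne_j) (apart _ _ true false ne_j3)
    (apart _ _ true true ne_j3) np3 np4).
have link_EF : same_face (rev (x j)) (rev (rev (x j4))).
  by rewrite revK same_face_sym.
have link_FA : same_face (rev (x j4)) (rev (rev (x j3))).
  by rewrite revK same_face_sym link.
apply: (flat_roof_flat_contra (B := rev (x j2)) (C := rev (x j1)) link_EF link_FA
  erefl _ erefl erefl _ erefl _ erefl erefl erefl _ _ _ _ np3 np4); rewrite !revK //.
- exact: (apart _ _ false true ne_j3).
- exact: (apart _ _ false false ne_j3).
- exact: (apart _ _ false true ne_j).
- exact: (apart _ _ false false ne_j).
Qed.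

End Map.

Theorem mainTheorem16 (D : finType) (rev nxt : D -> D)
  (HP : compact_RA_type rev nxt) (x : 'I_5 -> D)
  (hc : prismatic rev nxt x) :
  forall (i : 'I_5) (s : bool),
    ~ [/\ has_flat rev nxt x s (ord_pred i),
          has_roof rev nxt x s i &
          has_flat rev nxt x s (ordS i)].
Proof.
case: HP => [[[revK revN] nxtI _ _ [_ one_edge]] tri np3 np4 ge5] i s.
have := prismatic5_no_flat_roof_flat revK revN nxtI tri ge5 one_edge np3 np4 hc.
by move/(_ (ord_pred i) s); rewrite ord_predK.
Qed.
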